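(* Let $X$ be a connected open Riemann surface, $X^* = X\cup\{\infty\}$ its one-point compactification, and let $E \subseteq X$ be a closed subset. Then $E$ has the bounded exhaustion hull (BEH) property if and only if $X^* \setminus E$ is locally connected at $\infty$.
   Context: For a closed set $A\subseteq X$, a hole of $A$ is a relatively compact connected component of $X\setminus A$, and $h(A)$ denotes the union of all holes of $A$. A closed set $E\subseteq X$ has the BEH property if for every compact set $K\subseteq X$ the set $h(E\cup K)$ is relatively compact in $X$. *)

From HB Require Import structures.
From mathcomp Require Import all_boot all_order all_algebra.
From mathcomp Require Import all_classical all_reals all_analysis.
From mathcomp Require Import complex.
Set Implicit Arguments. Unset Strict Implicit. Unset Printing Implicit Defensive.
Import Order.TTheory GRing.Theory Num.Theory.
Import numFieldNormedType.Exports.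
Local Open Scope classical_set_scope.
Local Open Scope ring_scope.

(* The complex plane over a real field R: R[i] viewed as a normed module
   over itself (so that [derivable f z 1] is complex differentiability). *)
Definition cplx (R : realType) := (R[i])^o.

Definition is_chart (R : realType) (X : topologicalType)
  (U : set X) (phi : X -> cplx R) (psi : cplx R -> X) : Prop :=
  [/\ open U, open (phi @` U),
      (forall x, U x -> psi (phi x) = x),
      {within U, continuous phi} &
      {within phi @` U, continuous psi}].

Definition holomorphic_atlas (R : realType) (X : topologicalType)
  (A : set (set X * (X -> cplx R) * (cplx R -> X))) : Prop :=
  [/\ (forall c, A c -> is_chart c.1.1 c.1.2 c.2),
      (forall x : X, exists2 c, A c & c.1.1 x) &
      (forall c d, A c -> A d ->
         forall z, (c.1.2 @` (c.1.1 `&` d.1.1)) z ->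
           derivable (d.1.2 \o c.2) z 1)].

Definition riemann_surface (R : realType) (X : topologicalType) : Prop :=
  [/\ hausdorff_space X, connected [set: X] &
      exists A : set (set X * (X -> cplx R) * (cplx R -> X)),
        holomorphic_atlas A].

Definition rel_compact (X : topologicalType) (S : set X) : Prop :=
  compact (closure S).

Definition is_hole (X : topologicalType) (A : set X) (H : set X) : Prop :=
  exists2 x, (~` A) x &
    H = connected_component (~` A) x /\ rel_compact H.

Definition holes (X : topologicalType) (A : set X) : set X :=
  \bigcup_(H in is_hole A) H.

Definition BEH (X : topologicalType) (E : set X) : Prop :=
  forall K : set X, compact K -> rel_compact (holes (E `|` K)).

Definition locally_connected_at (T : topologicalType) (Y : set T) (p : T)
  : Prop :=
  forall W : set T, open W -> W p ->
    exists V : set T, [/\ V p, V `<=` W `&` Y, connected V &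
                          exists2 O : set T, open O & V = O `&` Y].

(* Only two properties of a Riemann surface matter: it is Hausdorff and
   locally connected, so that components of open sets are open.
   If E has BEH and K is compact, L := K ∪ cl h(E ∪ K) is compact, and
   (X \ (E ∪ L)) ∪ {∞} is a connected neighbourhood of ∞ in X^* \ E: a
   component of X \ (E ∪ K) that leaves cl h(E ∪ K) is not a hole, so it is
   not relatively compact and accumulates at ∞.
   Conversely, let V be a connected neighbourhood of ∞ in X^* \ E contained
   in X^* \ K. If V met a hole C of E ∪ K, then V ∩ C would be clopen in V
   (C is open, and cl C is compact and meets X \ (E ∪ K) only in C), hence
   all of V, which contains ∞. So h(E ∪ K) avoids V and lies in the compact
   complement of a neighbourhood of ∞. *)

From HB Require Import structures.
From mathcomp Require Import all_boot all_order all_algebra.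
From mathcomp Require Import all_classical all_reals all_analysis.
From mathcomp Require Import complex.
Import numFieldNormedType.Exports.
Local Open Scope classical_set_scope.

Set Implicit Arguments.
Unset Strict Implicit.
Unset Printing Implicit Defensive.
Import Order.TTheory GRing.Theory Num.Theory.

Section complex_plane.
Variable R : realType.
Local Open Scope ring_scope.
Local Open Scope complex_scope.

Lemma norm_real_complex (t : R) : `|t%:C| = `|t|%:C :> R[i].
Proof. by rewrite normc_def /= expr0n /= addr0 sqrtr_sqr. Qed.

Lemma real_complex_continuous : continuous (fun t : R => t%:C : cplx R).
Proof.
move=> t; apply/cvgrPdist_lt => e; rewrite ltcE => /andP[/eqP Ime0 Ree0].
have -> : e = (complex.Re e)%:C by case: e Ime0 {Ree0} => a b /= ->.
move/cvgrPdist_lt : (@cvg_id _ (nbhs t)) => /(_ _ Ree0); apply: filterS => s ts.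
by rewrite -rmorphB norm_real_complex ltcR.
Qed.

Lemma ball_connected (z : cplx R) (r : R[i]) : connected (ball z r).
Proof.
pose seg y (t : R) : cplx R := z + t%:C * (y - z).
have seg_ball y t : ball z r y -> t \in `[0, 1] -> ball z r (seg y t).
  rewrite -!ball_normE /ball_ /= in_itv /= => zy /andP[t0 t1].
  rewrite /seg opprD addrA subrr add0r normrN normrM norm_real_complex.
  apply: le_lt_trans zy; rewrite distrC ler_piMl // lecR ger0_norm //.
have -> : ball z r = \bigcup_(y in ball z r) (seg y @` `[0, 1]).
  apply/seteqP; split => [y zy|_ [y zy [t t01 <-]]]; last exact: seg_ball.
  exists y => //; exists 1; first by rewrite /= in_itv /= lexx ler01.
  by rewrite /seg mul1r addrC subrK.
apply: bigcup_connected.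
  exists z => y _; exists 0; first by rewrite /= in_itv /= lexx ler01.
  by rewrite /seg mul0r addr0.
move=> y _.
apply: connected_continuous_connected; first exact: segment_connected.
apply: continuous_subspaceT => t.
apply: cvgD; first exact: cvg_cst.
by apply: cvgM; [exact: real_complex_continuous | exact: cvg_cst].
Qed.

End complex_plane.

Definition locally_connected (X : topologicalType) : Prop :=
  forall (x : X) (W : set X), open W -> W x ->
    exists V : set X, [/\ open V, V x, V `<=` W & connected V].

Lemma chart_connected_nbhs (R : realType) (X : topologicalType) (U : set X)
    (phi : X -> cplx R) (psi : cplx R -> X) (x : X) (W : set X) :
  is_chart U phi psi -> U x -> open W -> W x ->
  exists V : set X, [/\ open V, V x, V `<=` W & connected V].
Proof.
move=> [oU ophiU psiK cphi cpsi] Ux oW Wx.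
have cphi' := cphi; rewrite continuous_open_subspace // in cphi'.
have cpsi' := cpsi; rewrite continuous_open_subspace // in cpsi'.
pose S := phi @` U `&` psi @^-1` (U `&` W).
have /nbhs_ballP [r r0 rS] : nbhs (phi x) S.
  apply: open_nbhs_nbhs; split.
    exact: (continuous_inP _ ophiU).1 cpsi' _ (openI oU oW).
  by split; [exists x | rewrite /preimage /= psiK].
have chart_ball : U `&` phi @^-1` ball (phi x) r = psi @` ball (phi x) r.
  apply/seteqP; split => [v [Uv Bv]|_ [z Bz <-]].
    by exists (phi v) => //; rewrite psiK.
  have [[u Uu uz] _] := rS _ Bz.
  by rewrite -uz psiK //; split => //; rewrite /preimage /= uz.
exists (U `&` phi @^-1` ball (phi x) r); split.
- exact: (continuous_inP _ oU).1 cphi' _ (ball_open _ _).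
- by split => //; exact: ballxx.
- by move=> v [Uv /rS [_]]; rewrite /preimage /= psiK // => -[].
rewrite chart_ball.
apply: connected_continuous_connected; first exact: ball_connected.
by apply: continuous_subspaceW cpsi => z /rS [].
Qed.

Lemma riemann_surface_locally_connected (R : realType) (X : topologicalType) :
  riemann_surface R X -> locally_connected X.
Proof.
move=> [_ _ [A [chartA coverA _]]] x W oW Wx.
have [[[U phi] psi] Ac /= Ux] := coverA x.
exact: chart_connected_nbhs (chartA _ Ac) Ux oW Wx.
Qed.

Lemma connected_sub_closure (T : topologicalType) (A B : set T) :
  connected A -> A `<=` B -> B `<=` closure A -> connected B.
Proof.
move=> cA AB BclA C [q Cq] [U oU CU] [F cF CF].
have AUF : A `&` U = A `&` F by rewrite -(setIidl AB) -!setIA -CU CF.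
have [y [Ay Uy]] : A `&` U !=set0.
  have [Bq Uq] : B q /\ U q by move: Cq; rewrite CU.
  exact: (BclA q Bq) (open_nbhs_nbhs _).
have AU : A `&` U = A by apply: cA; [exists y | exists U | exists F].
have BF : B `<=` F.
  move=> z /BclA; rewrite ((closure_id F).1 cF); apply: closureS.
  by rewrite -AU AUF => a [].
by rewrite CF; apply/setIidl.
Qed.

Lemma rel_compact_sub (X : topologicalType) (S K : set X) :
  S `<=` K -> compact K -> closed K -> rel_compact S.
Proof.
move=> SK cK clK; apply: subclosed_compact (@closed_closure _ S) cK _.
by move=> y /(closureS SK); rewrite -((closure_id K).1 clK).
Qed.

Lemma holes_sub (X : topologicalType) (A : set X) : holes A `<=` ~` A.
Proof. by move=> x [_ [w _ [-> _]]]; exact: connected_component_sub. Qed.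

Lemma rel_compact_component_holes (X : topologicalType) (A : set X) (x : X) :
  (~` A) x -> rel_compact (connected_component (~` A) x) -> holes A x.
Proof.
move=> Ax rcx; exists (connected_component (~` A) x); first by exists x.
exact: connected_component_refl.
Qed.

Section locally_connected_components.
Variables (X : topologicalType) (lcX : locally_connected X).

Lemma open_connected_component (A : set X) (x : X) :
  open A -> open (connected_component A x).
Proof.
move=> oA; rewrite openE => y Cy; have Ay := connected_component_sub Cy.
have [V [oV Vy VA cV]] := lcX oA Ay.
rewrite /interior (same_connected_component Cy).
apply: filterS (open_nbhs_nbhs (conj oV Vy)).
exact: connected_component_max.
Qed.

Lemma closure_connected_component (G : set X) (x y : X) :
  open G -> G y -> closure (connected_component G x) y ->
  connected_component G x y.
Proof.
move=> oG Gy clCy.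
have [z [Cxz Cyz]] : connected_component G x `&` connected_component G y !=set0.
  apply/clCy/open_nbhs_nbhs; split; first exact: open_connected_component.
  exact: connected_component_refl.
rewrite (same_connected_component Cxz) -(same_connected_component Cyz).
exact: connected_component_refl.
Qed.

Lemma closure_holes_component (A : set X) (x y : X) : closed A ->
  closure (holes A) y -> connected_component (~` A) x y -> holes A x.
Proof.
move=> clA clHy Cxy; have oA := closed_openC clA.
have Ax : (~` A) x.
  by apply: contrapT => /connected_component_out Cx0; rewrite Cx0 in Cxy.
have [h [[_ [w Aw [-> rcw]] Cwh] Cxh]] :
    holes A `&` connected_component (~` A) x !=set0.
  apply: clHy; apply: open_nbhs_nbhs; split => //.
  exact: open_connected_component.
apply: rel_compact_component_holes => //.
by rewrite (same_connected_component Cxh) -(same_connected_component Cwh).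
Qed.

End locally_connected_components.

Section one_point_compactification_infty.
Variable X : topologicalType.
Local Notation opc := (one_point_compactification X).

Lemma open_infty_cocompact (O : set opc) : open O -> O None ->
  exists K : set X, [/\ compact K, closed K & forall x, ~ K x -> O (Some x)].
Proof.
rewrite openE => oO /oO [K [cK clK] KO].
by exists K; split => // x Kx; apply: KO; left; exists x.
Qed.

Lemma open_infty_complement (K : set X) : compact K -> closed K ->
  open (Some @` (~` K) `|` [set None] : set opc).
Proof.
move=> cK clK; rewrite openE => -[x|] Ox; last by exists K.
case: Ox => [[y Ky [<-]]|//]; rewrite /interior /=.
apply: (@filterS _ _ _ (~` K)); first by move=> z Kz; left; exists z.
exact: open_nbhs_nbhs (conj (closed_openC clK) Ky).
Qed.

Lemma closure_Some_infty (S : set X) :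
  ~ rel_compact S -> closure (Some @` S : set opc) None.
Proof.
move=> nrcS B [K [cK clK] KB]; apply: contrapT => SB0; apply: nrcS.
apply: rel_compact_sub cK clK => y Sy; apply: contrapT => Ky; apply: SB0.
by exists (Some y); split; [exists y | apply: KB; left; exists y].
Qed.

End one_point_compactification_infty.

Section infty_neighbourhoods.
Variables (X : topologicalType) (lcX : locally_connected X).
Local Notation opc := (one_point_compactification X).

Lemma connected_infty_outside_holes (A : set X) : closed A ->
  connected (Some @` (~` (A `|` closure (holes A))) `|` [set None] : set opc).
Proof.
move=> clA.
pose P (o : option X) :=
  if o is Some x then (~` A) x /\ ~ closure (holes A) x else True.
(* The index [None] covers the case where every component is a hole. *)
pose piece (o : option X) : set opc :=
  if o is Some x then Some @` connected_component (~` A) x `|` [set None]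
  else [set None].
have -> : Some @` (~` (A `|` closure (holes A))) `|` [set None] =
          \bigcup_(o in P) piece o.
  apply/seteqP; split.
    move=> p [[y AHy <-]|->]; last by exists None.
    exists (Some y); first by split=> h; apply: AHy; [left | right].
    left; exists y => //.
    by apply: connected_component_refl => Ay; apply: AHy; left.
  move=> p [[x|] /= Px]; last by move=> ->; right.
  case: Px => Ax nHx [[y Cxy <-]|->]; last by right.
  left; exists y => // -[Ay|Hy]; first exact: (connected_component_sub Cxy).
  apply: nHx; apply: subset_closure.
  exact: (closure_holes_component lcX clA Hy Cxy).
apply: bigcup_connected; first by exists None => -[x|] _ /=; [right|].
move=> [x [Ax nHx]|_] /=; last exact: connected1.
pose Cx : set opc := Some @` connected_component (~` A) x.
apply: (@connected_sub_closure _ Cx).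
- apply: connected_continuous_connected; first exact: component_connected.
  exact/continuous_subspaceT/one_point_compactification_some_continuous.
- by move=> p Cp; left.
- move=> p [Cp|->]; first exact: subset_closure.
  apply: closure_Some_infty => rcx; apply/nHx/subset_closure.
  exact: rel_compact_component_holes.
Qed.

Lemma BEH_locally_connected_infty (E : set X) : closed E -> BEH E ->
  locally_connected_at (~` (Some @` E) : set opc) None.
Proof.
move=> clE BEHE W oW WN.
have [K [cK clK KW]] := open_infty_cocompact oW WN.
have clEK : closed (E `|` K) := closedU clE clK.
pose L := K `|` closure (holes (E `|` K)).
have cL : compact L by apply: compactU => //; exact: BEHE.
have clL : closed L by apply: closedU => //; exact: closed_closure.
exists (Some @` (~` (E `|` K `|` closure (holes (E `|` K)))) `|` [set None]).
split; [by right | | exact: connected_infty_outside_holes |].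
- move=> _ [[y EKHy <-]|->]; last by split=> // -[].
  split; first by apply: KW => Ky; apply: EKHy; left; right.
  by move=> [z Ez [zy]]; apply: EKHy; left; left; rewrite -zy.
- exists (Some @` (~` L) `|` [set None]); first exact: open_infty_complement.
  apply/seteqP; split=> [_ [[y EKHy <-]|->]|[y|] [+ EY]].
  - split; last by move=> [z Ez [zy]]; apply: EKHy; left; left; rewrite -zy.
    by left; exists y => // -[Ky|Hy]; apply: EKHy; [left; right | right].
  - by split=> [|[]]; [right|].
  - move=> [[z Lz [zy]]|//]; left; exists y => // -[[Ey|Ky]|Hy].
    + by apply: EY; exists y.
    + by apply: Lz; left; rewrite zy.
    + by apply: Lz; right; rewrite zy.
  - by move=> _; right.
Qed.

Lemma connected_infty_avoids_holes (A : set X) (V : set opc) (x : X) :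
  closed A -> connected V -> V None -> V `<=` Some @` (~` A) `|` [set None] ->
  holes A x -> ~ V (Some x).
Proof.
move=> clA cV VN VA [_ [w Aw [-> rcC]] Cx] Vx.
pose C := connected_component (~` A) w.
have VC : V `&` Some @` C = V.
  apply: cV; first by exists (Some x); split => //; exists x.
    exists (Some @` C) => //; apply: one_point_compactification_open_some.
    exact: (open_connected_component lcX w (closed_openC clA)).
  exists (~` (Some @` (~` closure C) `|` [set None])).
    exact/open_closedC/open_infty_complement/closed_closure.
  apply/seteqP; split=> [p [Vp [y Cy yp]]|[y|] [Vp nCp]].
  - split=> //; rewrite -yp; move=> [[z nCz [zy]]|//].
    by apply: nCz; rewrite zy; exact: subset_closure.
  - split=> //; exists y => //.
    have Ay : (~` A) y by case: (VA _ Vp) => [[z Az [<-]]|//].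
    apply: (closure_connected_component lcX (closed_openC clA) Ay).
    by apply: contrapT => nCy; apply: nCp; left; exists y.
  - by exfalso; apply: nCp; right.
by move: VN; rewrite -VC => [[_ [y _]]].
Qed.

Lemma locally_connected_infty_BEH (E : set X) :
  hausdorff_space X -> closed E ->
  locally_connected_at (~` (Some @` E) : set opc) None -> BEH E.
Proof.
move=> hausX clE lcE K cK.
have clK : closed K := compact_closed hausX cK.
have [V [VN VWY cV [U oU VUY]]] :=
  lcE _ (open_infty_complement cK clK) (or_intror erefl).
have [UN _] : (U `&` ~` (Some @` E)) None by rewrite -VUY.
have [L [cL clL LU]] := open_infty_cocompact oU UN.
apply: rel_compact_sub cL clL => x Hx; apply: contrapT => Lx.
have EKx := holes_sub Hx.
apply: (connected_infty_avoids_holes (closedU clE clK) cV VN _ Hx).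
  move=> p /VWY [[[y Ky <-]|->] EYp]; [left; exists y => // | by right].
  by move=> [Ey|//]; apply: EYp; exists y.
rewrite VUY; split; first exact: LU.
by move=> [y Ey [yx]]; apply: EKx; left; rewrite -yx.
Qed.

End infty_neighbourhoods.

Theorem proposition3p1 (R : realType) (X : topologicalType)
  (hX : riemann_surface R X) (hopen : ~ compact [set: X])
  (E : set X) (hE : closed E) :
  BEH E <->
  locally_connected_at (T := one_point_compactification X)
    (~` (Some @` E)) None.
Proof.
have [hausX _ _] := hX.
have lcX := riemann_surface_locally_connected hX.
split; first exact: BEH_locally_connected_infty.
exact: locally_connected_infty_BEH.
Qed.
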